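(* Let $A \in \mathbb{R}^{m \times r}$ and $B \in \mathbb{R}^{r \times n}$, and for $\kappa\in\mathbb{R}^r_+$ let $f_\kappa\colon\mathbb{R}^n_+\to\mathbb{R}^m$, $f_\kappa(x)=A_\kappa x^B$. The following are equivalent: (i) $f_\kappa$ is injective on $\mathbb{R}^n_+$ for all $\kappa\in\mathbb{R}^r_+$; (ii) $\ker(B)=\{0\}$ and $\sigma(\ker(A)) \cap \sigma(\mathrm{im}(B)) = \{0\}$.
   Context: $\mathbb{R}_+$ denotes the strictly positive reals. $(x^B)_j=\prod_i x_i^{b_{ji}}$ (real exponents), $A_\kappa=A\,\mathrm{diag}(\kappa)$. $\sigma$ denotes the componentwise sign vector in $\{-,0,+\}^k$, $\sigma(T)=\{\sigma(x)\mid x\in T\}$, and $0$ in (ii) denotes the zero sign vector. *)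

From Stdlib Require Import Reals.
Open Scope R_scope.

(* Vectors in R^k are functions nat -> R (only indices < k matter);
   a matrix in R^{p x q} is a function nat -> nat -> R, entry (row i, col j)
   being M i j for i < p, j < q. *)

Fixpoint sumR (k : nat) (f : nat -> R) : R :=
  match k with O => 0 | S k' => sumR k' f + f k' end.
Fixpoint prodR (k : nat) (f : nat -> R) : R :=
  match k with O => 1 | S k' => prodR k' f * f k' end.

Definition mulmv (q : nat) (M : nat -> nat -> R) (v : nat -> R) : nat -> R :=
  fun i => sumR q (fun j => M i j * v j).

Definition posvec (k : nat) (x : nat -> R) : Prop := forall i, (i < k)%nat -> 0 < x i.

Definition monB (n : nat) (B : nat -> nat -> R) (x : nat -> R) : nat -> R :=
  fun j => prodR n (fun i => Rpower (x i) (B j i)).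

Definition fk (r n : nat) (A B : nat -> nat -> R) (kappa x : nat -> R) : nat -> R :=
  mulmv r (fun i j => A i j * kappa j) (monB n B x).

Definition inj_pos (m r n : nat) (A B : nat -> nat -> R) (kappa : nat -> R) : Prop :=
  forall x y, posvec n x -> posvec n y ->
    (forall i, (i < m)%nat -> fk r n A B kappa x i = fk r n A B kappa y i) ->
    forall i, (i < n)%nat -> x i = y i.

Inductive sgn := Sneg | Szero | Spos.
Definition sign (a : R) : sgn :=
  match Rlt_dec a 0 with
  | left _ => Sneg
  | right _ => if Req_EM_T a 0 then Szero else Spos
  end.

Definition in_ker (m r : nat) (A : nat -> nat -> R) (u : nat -> R) : Prop :=
  forall i, (i < m)%nat -> mulmv r A u i = 0.

Definition in_im (r n : nat) (B : nat -> nat -> R) (w : nat -> R) : Prop :=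
  exists v, forall j, (j < r)%nat -> w j = mulmv n B v j.

Definition ker_trivial (r n : nat) (B : nat -> nat -> R) : Prop :=
  forall v, in_ker r n B v -> forall i, (i < n)%nat -> v i = 0.

Definition sign_cond (m r n : nat) (A B : nat -> nat -> R) : Prop :=
  forall u w, in_ker m r A u -> in_im r n B w ->
    (forall j, (j < r)%nat -> sign (u j) = sign (w j)) ->
    forall j, (j < r)%nat -> sign (u j) = Szero.

From Stdlib Require Import Reals Lra Lia.
Open Scope R_scope.

(* Pass to logarithmic coordinates: writing x = exp v
   componentwise, the generalized monomial becomes x^B = exp (B v), so
     f_kappa(exp v) - f_kappa(exp v') = A (kappa o (exp (B v) - exp (B v'))).
   Hence f_kappa is injective on the positive orthant iff, for all v, v',
   kappa o (exp (B v) - exp (B v')) in ker A forces v = v' ([log_injective]).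
   Two sign facts drive both implications:
   - for kappa_j > 0, kappa_j (e^a - e^b) has the sign of a - b, so the vector
     u = kappa o (exp (B v) - exp (B v')) of ker A has the sign pattern of
     w = B (v - v') in im B;
   - conversely, two reals of equal sign differ by a positive factor, so any
     u in ker A sign-matching w = B v in im B is of the form
     kappa o (exp (B v) - exp 0) for a suitable positive kappa. *)

Lemma sumR_ext k f g :
  (forall j, (j < k)%nat -> f j = g j) -> sumR k f = sumR k g.
Proof.
  induction k as [|k IH]; simpl; intros Hfg; [reflexivity|].
  rewrite IH by (intros; apply Hfg; lia). rewrite Hfg by lia. reflexivity.
Qed.

Lemma sumR_sub k f g : sumR k (fun j => f j - g j) = sumR k f - sumR k g.
Proof. induction k as [|k IH]; simpl; [ring|]. rewrite IH; ring. Qed.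

Lemma sumR_zero k : sumR k (fun _ => 0) = 0.
Proof. induction k as [|k IH]; simpl; [ring|]. rewrite IH; ring. Qed.

Lemma prodR_exp k g : prodR k (fun i => exp (g i)) = exp (sumR k g).
Proof.
  induction k as [|k IH]; simpl; [symmetry; apply exp_0|].
  rewrite IH, exp_plus; ring.
Qed.

Lemma mulmv_ext q M v w i :
  (forall j, (j < q)%nat -> v j = w j) -> mulmv q M v i = mulmv q M w i.
Proof. intros Hvw. apply sumR_ext. intros j Hj. rewrite Hvw by exact Hj. reflexivity. Qed.

Lemma mulmv_sub q M v w i :
  mulmv q M (fun j => v j - w j) i = mulmv q M v i - mulmv q M w i.
Proof. unfold mulmv. rewrite <- sumR_sub. apply sumR_ext. intros; ring. Qed.

Lemma mulmv_zero q M i : mulmv q M (fun _ => 0) i = 0.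
Proof.
  unfold mulmv. rewrite (sumR_ext q _ (fun _ => 0)) by (intros; ring).
  apply sumR_zero.
Qed.

Lemma monB_exp n B x j : monB n B x j = exp (mulmv n B (fun i => ln (x i)) j).
Proof. apply prodR_exp. Qed.

Lemma monB_expv n B v j : monB n B (fun i => exp (v i)) j = exp (mulmv n B v j).
Proof.
  rewrite monB_exp. f_equal. apply mulmv_ext. intros; apply ln_exp.
Qed.

Lemma fk_sub r n A B kappa x y i :
  fk r n A B kappa x i - fk r n A B kappa y i =
  mulmv r A (fun j => kappa j * (monB n B x j - monB n B y j)) i.
Proof. unfold fk, mulmv. rewrite <- sumR_sub. apply sumR_ext. intros; ring. Qed.

Definition log_injective (m r n : nat) (A B : nat -> nat -> R) (kappa : nat -> R) :=
  forall v v',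
    in_ker m r A (fun j => kappa j * (exp (mulmv n B v j) - exp (mulmv n B v' j))) ->
    forall i, (i < n)%nat -> v i = v' i.

Lemma inj_pos_iff_log_injective m r n A B kappa :
  inj_pos m r n A B kappa <-> log_injective m r n A B kappa.
Proof.
  split.
  - intros Hinj v v' Hker i Hi.
    apply exp_inv.
    apply (Hinj (fun i => exp (v i)) (fun i => exp (v' i)));
      [intros k _; apply exp_pos | intros k _; apply exp_pos | | exact Hi].
    intros k Hk. apply Rminus_diag_uniq.
    rewrite fk_sub, <- (Hker k Hk). apply mulmv_ext.
    intros j _. rewrite !monB_expv. reflexivity.
  - intros Hlog x y Hx Hy Heq i Hi.
    apply ln_inv; [apply Hx, Hi | apply Hy, Hi |].
    apply (Hlog (fun i => ln (x i)) (fun i => ln (y i))); [|exact Hi].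
    intros k Hk. rewrite <- (Rminus_diag_eq _ _ (Heq k Hk)), fk_sub.
    apply mulmv_ext. intros j _. rewrite !monB_exp. reflexivity.
Qed.

Lemma sign_cases a :
  (a < 0 /\ sign a = Sneg) \/ (a = 0 /\ sign a = Szero) \/ (0 < a /\ sign a = Spos).
Proof.
  unfold sign. destruct (Rlt_dec a 0); [left; auto|].
  destruct (Req_EM_T a 0); right; [left | right]; split; auto; lra.
Qed.

Lemma sign_zero_iff a : sign a = Szero <-> a = 0.
Proof.
  destruct (sign_cases a) as [[? ->]|[[? ->]|[? ->]]]; split; intros; try discriminate; auto; lra.
Qed.

Lemma sign_eq_intro a b : (a < 0 <-> b < 0) -> (0 < a <-> 0 < b) -> sign a = sign b.
Proof.
  intros Hneg Hpos.
  destruct (sign_cases a) as [[? ->]|[[? ->]|[? ->]]];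
  destruct (sign_cases b) as [[? ->]|[[? ->]|[? ->]]]; auto; exfalso;
  destruct Hneg, Hpos; lra.
Qed.

Lemma sign_mul_pos k a : 0 < k -> sign (k * a) = sign a.
Proof. intros Hk. apply sign_eq_intro; split; intros; nra. Qed.

Lemma sign_exp_sub a b : sign (exp a - exp b) = sign (a - b).
Proof.
  apply sign_eq_intro; split; intros H.
  - assert (a < b) by (apply exp_lt_inv; lra). lra.
  - assert (exp a < exp b) by (apply exp_increasing; lra). lra.
  - assert (b < a) by (apply exp_lt_inv; lra). lra.
  - assert (exp b < exp a) by (apply exp_increasing; lra). lra.
Qed.

Definition sign_ratio (a b : R) : R := if Req_EM_T b 0 then 1 else a / b.

Lemma sign_ratio_spec a b :
  sign a = sign b -> 0 < sign_ratio a b /\ a = sign_ratio a b * b.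
Proof.
  unfold sign_ratio. intros Hab.
  destruct (Req_EM_T b 0) as [Hb|Hb].
  - assert (Ha : a = 0).
    { apply sign_zero_iff. rewrite Hab. apply sign_zero_iff, Hb. }
    split; [lra | rewrite Ha, Hb; ring].
  - split; [|field; exact Hb].
    destruct (sign_cases a) as [[? Ea]|[[? Ea]|[? Ea]]];
    destruct (sign_cases b) as [[? Eb]|[[? Eb]|[? Eb]]];
      rewrite Ea, Eb in Hab; try discriminate; try lra.
    + replace (a / b) with (- a * / - b) by (field; exact Hb).
      apply Rmult_lt_0_compat; [lra | apply Rinv_0_lt_compat; lra].
    + apply Rmult_lt_0_compat; [lra | apply Rinv_0_lt_compat; lra].
Qed.

(* (i) => ker B = {0}: if B v = 0 then f_kappa(exp v) = f_kappa(1). *)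
Lemma ker_trivial_of_injective m r n A B kappa :
  inj_pos m r n A B kappa -> ker_trivial r n B.
Proof.
  intros Hinj v Hv i Hi.
  apply (proj1 (inj_pos_iff_log_injective m r n A B kappa) Hinj v (fun _ => 0));
    [|exact Hi].
  intros k _. transitivity (mulmv r A (fun _ => 0) k); [apply mulmv_ext | apply mulmv_zero].
  intros j Hj. rewrite Hv, mulmv_zero by exact Hj. ring.
Qed.

(* (i) => sign condition: a kernel vector u sign-matching w = B v is
   kappa o (exp (B v) - exp 0) for a positive kappa, so injectivity of
   f_kappa forces v = 0, hence w = 0 and u = 0. *)
Lemma sign_cond_of_injective m r n A B :
  (forall kappa, posvec r kappa -> inj_pos m r n A B kappa) -> sign_cond m r n A B.
Proof.
  intros Hinj u w Hu [v Hw] Hsign j Hj.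
  set (kappa := fun j => sign_ratio (u j) (exp (w j) - exp 0)).
  assert (Hratio : forall j, (j < r)%nat ->
            0 < kappa j /\ u j = kappa j * (exp (w j) - exp 0)).
  { intros k Hk. apply sign_ratio_spec.
    rewrite sign_exp_sub, Rminus_0_r. apply Hsign, Hk. }
  assert (Hv0 : forall i, (i < n)%nat -> v i = 0).
  { apply (proj1 (inj_pos_iff_log_injective m r n A B kappa)
             (Hinj kappa (fun k Hk => proj1 (Hratio k Hk))) v (fun _ => 0)).
    intros i Hi. transitivity (mulmv r A u i); [apply mulmv_ext | apply Hu, Hi].
    intros k Hk. rewrite (proj2 (Hratio k Hk)), Hw, mulmv_zero by exact Hk.
    reflexivity. }
  rewrite Hsign by exact Hj. apply sign_zero_iff.
  rewrite Hw by exact Hj.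
  transitivity (mulmv n B (fun _ => 0) j); [apply mulmv_ext, Hv0 | apply mulmv_zero].
Qed.

(* (ii) => (i): for positive kappa, u = kappa o (exp (B v) - exp (B v')) has
   the sign pattern of w = B (v - v'); the sign condition kills w, and the
   trivial kernel of B then gives v = v'. *)
Lemma injective_of_sign_cond m r n A B kappa :
  ker_trivial r n B -> sign_cond m r n A B -> posvec r kappa ->
  inj_pos m r n A B kappa.
Proof.
  intros Hker Hsc Hk.
  apply inj_pos_iff_log_injective. intros v v' Hu i Hi.
  assert (Hw : in_im r n B (fun j => mulmv n B v j - mulmv n B v' j)).
  { exists (fun i => v i - v' i). intros j _. symmetry. apply mulmv_sub. }
  assert (HBv : in_ker r n B (fun i => v i - v' i)).
  { intros j Hj. rewrite mulmv_sub. apply sign_zero_iff.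
    rewrite <- sign_exp_sub, <- (sign_mul_pos (kappa j)) by (apply Hk, Hj).
    apply (Hsc _ _ Hu Hw); [|exact Hj].
    intros k Hk'. rewrite sign_mul_pos by (apply Hk, Hk'). apply sign_exp_sub. }
  apply Rminus_diag_uniq, (Hker _ HBv i Hi).
Qed.

Theorem mainTheorem9 (m r n : nat) (A B : nat -> nat -> R) :
  (forall kappa : nat -> R, posvec r kappa -> inj_pos m r n A B kappa) <->
  (ker_trivial r n B /\ sign_cond m r n A B).
Proof.
  split.
  - intros Hinj. split.
    + apply (ker_trivial_of_injective m r n A B (fun _ => 1)).
      apply Hinj. intros j _. lra.
    + apply sign_cond_of_injective, Hinj.
  - intros [Hker Hsc] kappa Hk. apply injective_of_sign_cond; assumption.
Qed.
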